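(* For all $x\in\mathbb{C}$ and all integers $n\ge0$, \[ \sum_{k=0}^n(-1)^kx^{n-k}\big(L_{k+1}+(x-2)F_k\big)=(-1)^nF_{n+1},\qquad \sum_{k=0}^n(-1)^kx^{n-k}\big(5F_{k+1}+(x-2)L_k\big)=(-1)^nL_{n+1}+2x^{n+1}, \] \[ \sum_{k=0}^n(-1)^kx^{n-k}\big(Q_{k+1}+2(x-1)P_k\big)=2(-1)^nP_{n+1},\qquad \sum_{k=0}^n(-1)^kx^{n-k}\big(4P_{k+1}+(x-1)Q_k\big)=(-1)^nQ_{n+1}+2x^{n+1}. \]
   Context: $F_n,L_n$ are the Fibonacci and Lucas numbers ($F_0=0,F_1=1,L_0=2,L_1=1$, $W_n=W_{n-1}+W_{n-2}$). $P_n,Q_n$ are the Pell and Pell–Lucas numbers: $P_0=0$, $P_1=1$, $Q_0=2$, $Q_1=2$, $W_n=2W_{n-1}+W_{n-2}$. *)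

From HB Require Import structures.
From mathcomp Require Import all_boot all_order all_algebra.
From mathcomp Require Export complex.
From mathcomp Require Export Rstruct.
From Stdlib Require Import Reals.
Set Implicit Arguments. Unset Strict Implicit. Unset Printing Implicit Defensive.

Definition CC := complex.complex R.

Fixpoint fib (n : nat) : nat :=
  match n with 0 => 0 | 1 => 1 | (m.+1 as p).+1 => fib p + fib m end.
Fixpoint lucas (n : nat) : nat :=
  match n with 0 => 2 | 1 => 1 | (m.+1 as p).+1 => lucas p + lucas m end.
Fixpoint pell (n : nat) : nat :=
  match n with 0 => 0 | 1 => 1 | (m.+1 as p).+1 => 2 * pell p + pell m end.
Fixpoint pell_lucas (n : nat) : nat :=
  match n with 0 => 2 | 1 => 2 | (m.+1 as p).+1 => 2 * pell_lucas p + pell_lucas m end.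

From mathcomp Require Import all_boot all_order all_algebra complex Rstruct.
From mathcomp Require Import ring zify.
Import GRing.Theory Num.Theory.
Local Open Scope ring_scope.

(* Each summand has the form [x * v k + v k.+1] for v = F, L, 2P, Q, by the
   classical relations L_{k+1} = F_{k+1} + 2 F_k, 5 F_{k+1} = L_{k+1} + 2 L_k,
   Q_{k+1} = 2 (P_{k+1} + P_k) and 4 P_{k+1} = Q_{k+1} + Q_k.  The alternating
   sum of [(-1)^k x^(n-k) (x v_k + v_{k+1})] telescopes to
   [x^(n+1) v_0 + (-1)^n v_{n+1}]. *)

Lemma rec2_eq (p : nat) (u w : nat -> nat) :
  (forall n, u n.+2 = p * u n.+1 + u n)%N ->
  (forall n, w n.+2 = p * w n.+1 + w n)%N ->
  u 0 = w 0 -> u 1 = w 1 -> u =1 w.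
Proof.
move=> recu recw u0 u1 n; suff [] : u n = w n /\ u n.+1 = w n.+1 by [].
elim: n => [|n [eq_n eq_n1]]; first by [].
by split; rewrite // recu recw eq_n eq_n1.
Qed.

Lemma fibSS n : (fib n.+2 = 1 * fib n.+1 + fib n)%N.
Proof. by rewrite mul1n. Qed.

Lemma lucasSS n : (lucas n.+2 = 1 * lucas n.+1 + lucas n)%N.
Proof. by rewrite mul1n. Qed.

Lemma pellSS n : (pell n.+2 = 2 * pell n.+1 + pell n)%N.
Proof. by []. Qed.

Lemma pell_lucasSS n : (pell_lucas n.+2 = 2 * pell_lucas n.+1 + pell_lucas n)%N.
Proof. by []. Qed.

Lemma lucasS_fib n : (lucas n.+1 = fib n.+1 + 2 * fib n)%N.
Proof.
apply: (@rec2_eq 1 (fun n => lucas n.+1) (fun n => fib n.+1 + 2 * fib n)%N)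
  => // m; rewrite ?fibSS ?lucasSS; lia.
Qed.

Lemma fibS_lucas n : (5 * fib n.+1 = lucas n.+1 + 2 * lucas n)%N.
Proof.
apply: (@rec2_eq 1 (fun n => 5 * fib n.+1) (fun n => lucas n.+1 + 2 * lucas n))%N
  => // m; rewrite ?fibSS ?lucasSS; lia.
Qed.

Lemma pell_lucasS_pell n : (pell_lucas n.+1 = 2 * (pell n.+1 + pell n))%N.
Proof.
apply: (@rec2_eq 2 (fun n => pell_lucas n.+1) (fun n => 2 * (pell n.+1 + pell n)))%N
  => // m; rewrite ?pellSS ?pell_lucasSS; lia.
Qed.

Lemma pellS_pell_lucas n : (4 * pell n.+1 = pell_lucas n.+1 + pell_lucas n)%N.
Proof.
apply: (@rec2_eq 2 (fun n => 4 * pell n.+1) (fun n => pell_lucas n.+1 + pell_lucas n))%N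
  => // m; rewrite ?pellSS ?pell_lucasSS; lia.
Qed.

Section AlternatingSum.

Variables (R : comPzRingType) (x : R).

Lemma alternating_sum_recr (t : nat -> R) n :
  \sum_(0 <= k < n.+2) (-1) ^+ k * x ^+ (n.+1 - k) * t k =
  x * \sum_(0 <= k < n.+1) (-1) ^+ k * x ^+ (n - k) * t k
  + (-1) ^+ n.+1 * t n.+1.
Proof.
rewrite big_nat_recr //= subnn expr0 mulr1; congr (_ + _).
rewrite big_distrr /=; apply: eq_big_nat => k /andP [_ le_kn].
by rewrite subSn // exprS; ring.
Qed.

Lemma alternating_sum_telescope (t v : nat -> R) n :
  (forall k, t k = x * v k + v k.+1) ->
  \sum_(0 <= k < n.+1) (-1) ^+ k * x ^+ (n - k) * t k
    = x ^+ n.+1 * v 0 + (-1) ^+ n * v n.+1.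
Proof.
move=> tE; elim: n => [|n IHn].
  by rewrite big_nat1 tE expr0 !mul1r expr1.
rewrite alternating_sum_recr IHn tE !exprS; ring.
Qed.

End AlternatingSum.

Theorem corollary10 (x : CC) (n : nat) :
  [/\ \sum_(0 <= k < n.+1) (-1) ^+ k * x ^+ (n - k)%N
        * ((lucas k.+1)%:R + (x - 2) * (fib k)%:R) = (-1) ^+ n * (fib n.+1)%:R,
      \sum_(0 <= k < n.+1) (-1) ^+ k * x ^+ (n - k)%N
        * (5 * (fib k.+1)%:R + (x - 2) * (lucas k)%:R)
        = (-1) ^+ n * (lucas n.+1)%:R + 2 * x ^+ n.+1,
      \sum_(0 <= k < n.+1) (-1) ^+ k * x ^+ (n - k)%N
        * ((pell_lucas k.+1)%:R + 2 * (x - 1) * (pell k)%:R)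
        = 2 * ((-1) ^+ n * (pell n.+1)%:R) &
      \sum_(0 <= k < n.+1) (-1) ^+ k * x ^+ (n - k)%N
        * (4 * (pell k.+1)%:R + (x - 1) * (pell_lucas k)%:R)
        = (-1) ^+ n * (pell_lucas n.+1)%:R + 2 * x ^+ n.+1].
Proof.
split.
- rewrite (@alternating_sum_telescope _ _ _ (fun k => (fib k)%:R)).
    by rewrite mulr0 add0r.
  by move=> k; cbv beta; rewrite lucasS_fib natrD natrM; ring.
- rewrite (@alternating_sum_telescope _ _ _ (fun k => (lucas k)%:R)).
    by cbv beta; rewrite [lucas 0]/=; ring.
  move=> k; cbv beta; rewrite -[5]/(5%:R : CC) -natrM fibS_lucas natrD natrM; ring.
- rewrite (@alternating_sum_telescope _ _ _ (fun k => 2 * (pell k)%:R)).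
    by cbv beta; rewrite [pell 0]/=; ring.
  by move=> k; cbv beta; rewrite pell_lucasS_pell natrM natrD; ring.
- rewrite (@alternating_sum_telescope _ _ _ (fun k => (pell_lucas k)%:R)).
    by cbv beta; rewrite [pell_lucas 0]/=; ring.
  move=> k; cbv beta; rewrite -[4]/(4%:R : CC) -natrM pellS_pell_lucas natrD; ring.
Qed.
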